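(* Let $K$ be a field, $d\ge2$ an integer, and $a_1,\dots,a_d\in K$ algebraically independent over the prime field of $K$. If the characteristic $p$ of $K$ is positive, suppose also $d\ge p$. Then the polynomial $a_1z+\cdots+a_dz^d\in K[z]$ has no parabolic periodic point.
   Context: A periodic point $z_0\in K$ of a polynomial $P$, of period $n$ (i.e. $P^n(z_0)=z_0$), is parabolic if its multiplier $(P^n)'(z_0)$ is a root of unity. *)

From HB Require Import structures.
From mathcomp Require Import all_boot all_order all_algebra.
From mathcomp Require Import mpoly.
Set Implicit Arguments. Unset Strict Implicit. Unset Printing Implicit Defensive.
Import GRing.Theory.
Local Open Scope ring_scope.

Definition in_prime_field (K : fieldType) (x : K) : Prop :=
  exists m n : int, n%:~R != 0 :> K /\ x = m%:~R / n%:~R.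

(* a_0, ..., a_{d-1} are algebraically independent over the prime field:
   no nonzero polynomial with coefficients in the prime field vanishes at a. *)
Definition alg_indep_prime (K : fieldType) (d : nat) (a : 'I_d -> K) : Prop :=
  forall Q : {mpoly K[d]}, (forall m, in_prime_field (Q@_m)) ->
    Q != 0 -> Q.@[a] != 0.

Definition poly_iter (K : fieldType) (P : {poly K}) (n : nat) : {poly K} :=
  iter n (fun q => P \Po q) (polyX K).

Definition root_of_unity (K : fieldType) (x : K) : Prop :=
  exists m : nat, (0 < m)%N /\ x ^+ m = 1.

Definition periodic_point (K : fieldType) (P : {poly K}) (n : nat) (z0 : K) :=
  (0 < n)%N /\ (poly_iter P n).[z0] = z0.

Definition multiplier (K : fieldType) (P : {poly K}) (n : nat) (z0 : K) : K :=
  ((poly_iter P n)^`()).[z0].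

Definition parabolic_periodic_point (K : fieldType) (P : {poly K}) (z0 : K) :=
  exists n, periodic_point P n z0 /\ root_of_unity (multiplier P n z0).

From HB Require Import structures.
From mathcomp Require Import all_boot all_order all_algebra.
From mathcomp Require Import mpoly.
From mathcomp Require Import boolp ring.
Import GRing.Theory.
Local Open Scope ring_scope.
Set Implicit Arguments. Unset Strict Implicit. Unset Printing Implicit Defensive.

(* Let s = a_d^-1 and let x be the family s, s a_1, .., s a_c, a_(c+1), ..,
   a_(d-1), where c = 1, or c = 2 when d = 1 in K.  Suitably scaled iterates
   of P are monic over Z[x], so periodic points of P are integral over Z[x].
   Modulo s, the polynomial s P is M = z^d + sum_(i <= c) s a_i z^i, and an
   explicit identity B M' + A M = r puts a nonzero r in Z[s a_1, s a_2] into
   the ideal (M, M').  Evaluating B (s P') = r (mod s) along a cycle of length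
   n and multiplying gives r^n = s^n lambda prod_j B(z_j) (mod s), where lambda
   is the multiplier.  A root of unity lambda is integral, so r^n would lie in
   s times the integral closure of Z[x].  But x inherits algebraic
   independence from a (clear denominators by a power of a_d), and reducing an
   integral equation of r^n / s modulo s forces r^n to vanish at s = 0, which
   it does not. *)

Section PolyIter.
Variables (K : fieldType) (P : {poly K}).

Lemma poly_iterS n : poly_iter P n.+1 = P \Po poly_iter P n.
Proof. by []. Qed.

Lemma horner_poly_iterD m n z :
  (poly_iter P (m + n)).[z] = (poly_iter P m).[(poly_iter P n).[z]].
Proof.
elim: m => [|m IHm]; first by rewrite /poly_iter /= hornerX.
by rewrite addSn !poly_iterS !horner_comp IHm.
Qed.

Lemma multiplierE n z :
  multiplier P n z = \prod_(j < n) P^`().[(poly_iter P j).[z]].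
Proof.
rewrite /multiplier; elim: n => [|n IHn].
  by rewrite big_ord0 /poly_iter /= derivX hornerC.
by rewrite poly_iterS deriv_comp hornerM horner_comp IHn big_ord_recr mulrC.
Qed.

End PolyIter.

Section IntegralClosure.
Variables (R : comNzRingType) (K : fieldType) (phi : {rmorphism R -> K}).

Definition integral_closure : {pred K} := fun u => `[< integralOver phi u >].

Lemma integral_closureP u : reflect (integralOver phi u) (u \in integral_closure).
Proof. exact: asboolP. Qed.

Fact integral_closure_subring_closed : subring_closed integral_closure.
Proof.
split; first exact/integral_closureP/integral1.
  by move=> u v /integral_closureP Iu /integral_closureP Iv;
     exact/integral_closureP/integral_sub.
by move=> u v /integral_closureP Iu /integral_closureP Iv;
   exact/integral_closureP/integral_mul.
Qed.

HB.instance Definition _ := GRing.isSubringClosed.Build K integral_closure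
  integral_closure_subring_closed.

Lemma rmorph_integral x : phi x \in integral_closure.
Proof. exact/integral_closureP/integral_id. Qed.

Lemma root_monic_integral (p : {poly K}) u :
  p \is monic -> p \is a polyOver integral_closure -> root p u ->
  u \in integral_closure.
Proof.
move=> p_monic /polyOverP Sp pu0; apply/integral_closureP.
apply: integral_root_monic p_monic pu0 _; apply/integral_poly => i.
exact/integral_closureP.
Qed.

Lemma unity_root_integral u m : (0 < m)%N -> u ^+ m = 1 -> u \in integral_closure.
Proof.
move=> m_gt0 um1; apply: (root_monic_integral (monicXnsubC 1 m_gt0)).
  by rewrite polyOverXnsubC rpred1.
by rewrite rootE !hornerE um1 subrr.
Qed.

End IntegralClosure.

Lemma prod_sub_mul_mem (R : comNzRingType) (S : subringClosed R) (s r : R)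
    (v : nat -> R) n :
  s \in S -> r \in S -> (forall j, v j \in S) ->
  exists2 w, w \in S & \prod_(j < n) (r - s * v j) = r ^+ n - s * w.
Proof.
move=> Ss Sr Sv; elim: n => [|n [w Sw IHn]].
  by exists 0; rewrite ?rpred0 // big_ord0 mulr0 subr0.
exists (r ^+ n * v n + w * r - s * w * v n).
  by rewrite !(rpredB, rpredD, rpredM, rpredX).
by rewrite big_ord_recr /= IHn exprSr; ring.
Qed.

Lemma monic_sum_scaleXS (R : nzRingType) k (c : 'I_k.+1 -> R) :
  c ord_max = 1 ->
  let p := \sum_(i < k.+1) c i *: 'X ^+ i.+1 in p \is monic /\ size p = k.+2.
Proof.
move=> c1 p; rewrite /p big_ord_recr /= c1 scale1r addrC.
set low := \sum_(i < k) _.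
have low_lt : (size low < size ('X ^+ k.+1 : {poly R}))%N.
  rewrite size_polyXn ltnS; apply: (leq_trans (size_sum _ _ _)).
  apply/bigmax_leqP => i _; apply: (leq_trans (size_scale_leq _ _)).
  by rewrite size_polyXn ltnS ltn_ord.
rewrite monicE lead_coefDl // lead_coefXn.
by rewrite size_polyDl // size_polyXn.
Qed.

Section PeriodicIntegral.
Variables (R : comNzRingType) (K : fieldType) (phi : {rmorphism R -> K}).
Local Notation S := (integral_closure phi).
Variables (k : nat) (a : 'I_k.+1 -> K) (s : K).
Hypothesis k_gt0 : (0 < k)%N.
Hypothesis s_S : s \in S.
Hypothesis sa_S : forall i, s * a i \in S.
Hypothesis sa_max : s * a ord_max = 1.
Local Notation P := (\sum_(i < k.+1) a i *: 'X ^+ i.+1).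

(* [s ^+ N j *: P^j] is monic over [S]: one more step multiplies the leading
   coefficient by [a_max] and raises the old one to the power [k.+1], so
   [N j.+1 = N j * k.+1 + 1] restores it to [s * a_max = 1]. *)
Fixpoint scale_exponent j :=
  if j is j'.+1 then (scale_exponent j' * k.+1).+1 else 0%N.
Local Notation N := scale_exponent.

Definition scaled_step j : {poly K} :=
  \sum_(i < k.+1) (s * a i * s ^+ (N j * (k - i))) *: 'X ^+ i.+1.

Definition scaled_iter j : {poly K} := s ^+ N j *: poly_iter P j.

Lemma scaled_iterS j : scaled_iter j.+1 = scaled_step j \Po scaled_iter j.
Proof.
rewrite /scaled_iter /scaled_step poly_iterS.
rewrite !linear_sum /=; apply: eq_bigr => i _.
rewrite /= !comp_polyZ !comp_Xn_poly exprZn !scalerA; congr (_ *: _).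
have -> : (N j * k.+1).+1 = (1 + N j * (k - i) + N j * i.+1)%N.
  by rewrite /= -addnA -mulnDr addnS subnK ?add1n // -ltnS.
by rewrite !exprD -exprM; ring.
Qed.

Lemma scaled_iter_monic j :
  scaled_iter j \is monic /\ (size (scaled_iter j)).-1 = (k.+1 ^ j)%N.
Proof.
elim: j => [|j [mon sz]].
  by rewrite /scaled_iter /= scale1r monicX size_polyX.
have [Tmon Tsz] : scaled_step j \is monic /\ size (scaled_step j) = k.+2.
  by apply: monic_sum_scaleXS; rewrite subnn muln0 mulr1 sa_max.
have sz_gt1 : (1 < size (scaled_iter j))%N.
  by rewrite -ltn_predRL sz expn_gt0.
rewrite scaled_iterS size_comp_poly Tsz sz expnS; split=> //.
by rewrite monicE lead_coef_comp // (monicP Tmon) (monicP mon) expr1n mulr1.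
Qed.

Lemma scaled_iter_polyOver j : scaled_iter j \is a polyOver S.
Proof.
elim: j => [|j IHj]; first by rewrite /scaled_iter /= scale1r polyOverX.
rewrite scaled_iterS polyOver_comp // rpred_sum // => i _.
by rewrite polyOverZ ?polyOverXn // rpredM ?rpredX.
Qed.

Lemma periodic_point_integral n z :
  (0 < n)%N -> (poly_iter P n).[z] = z -> z \in S.
Proof.
move=> n_gt0 zper; have [mon sz] := scaled_iter_monic n.
pose F := scaled_iter n - (s ^+ N n) *: 'X.
have F_monic : F \is monic.
  rewrite monicE lead_coefDl ?(monicP mon) // size_polyN.
  rewrite (leq_ltn_trans (size_scale_leq _ _)) // size_polyX -ltn_predRL sz.
  case: n n_gt0 {zper sz mon F} => // n _.
  by rewrite expnS (leq_trans _ (leq_pmulr _ _)) ?expn_gt0.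
apply: (root_monic_integral F_monic).
  by rewrite rpredB ?scaled_iter_polyOver // polyOverZ ?polyOverX ?rpredX.
by rewrite rootE /F !hornerE zper subrr.
Qed.

End PeriodicIntegral.

Section ParabolicCycle.
Variables (R : comNzRingType) (K : fieldType) (phi : {rmorphism R -> K}).
Local Notation S := (integral_closure phi).
Variables (P : {poly K}) (s r : K) (A B C : {poly K}).
Hypothesis s_S : s \in S.
Hypothesis r_S : r \in S.
Hypothesis periodic_integral :
  forall n z, (0 < n)%N -> (poly_iter P n).[z] = z -> z \in S.
Hypotheses (A_S : A \is a polyOver S) (B_S : B \is a polyOver S)
  (C_S : C \is a polyOver S).
Hypothesis bezout : B * (s *: P^`()) + A * (s *: P) = r%:P + s *: C.

Lemma parabolic_power_dvd z0 : parabolic_periodic_point P z0 ->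
  exists n, exists2 Y, Y \in S & r ^+ n = s * Y.
Proof.
move=> [n [[n_gt0 z0per] [m [m_gt0 unity]]]]; exists n.
pose z j := (poly_iter P j).[z0].
have z_S j : z j \in S.
  apply: (periodic_integral n_gt0).
  by rewrite /z -horner_poly_iterD addnC horner_poly_iterD z0per.
pose v j := A.[z j] * z j.+1 - C.[z j].
have v_S j : v j \in S.
  by rewrite rpredB ?rpredM ?(rpred_horner A_S) ?(rpred_horner C_S).
have factorE j : B.[z j] * (s * P^`().[z j]) = r - s * v j.
  have := congr1 (horner^~ (z j)) bezout.
  rewrite !(hornerD, hornerM, hornerZ) hornerC /v /z poly_iterS horner_comp.
  move: (B.[_]) (A.[_]) (C.[_]) (P.[_]) (P^`().[_]) => b a' c p p' E.
  by rewrite -[r](addrK (s * c)) -E; ring.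
have [w w_S prodE] := prod_sub_mul_mem n s_S r_S v_S.
have {prodE} : \prod_(j < n) (B.[z j] * (s * P^`().[z j])) = r ^+ n - s * w.
  by rewrite -prodE; apply: eq_bigr => j _; exact: factorE.
rewrite !big_split /= prodr_const card_ord -multiplierE => prodE.
exists (w + \prod_(j < n) B.[z j] * s ^+ n.-1 * multiplier P n z0).
  have unity_S : multiplier P n z0 \in S := unity_root_integral phi m_gt0 unity.
  by rewrite rpredD ?rpredM ?rpredX ?rpred_prod // => j _; rewrite rpred_horner.
have sE : s ^+ n = s * s ^+ n.-1 by rewrite -exprS prednK.
by rewrite -[r ^+ n](subrK (s * w)) -prodE sE; ring.
Qed.

End ParabolicCycle.

Lemma in_prime_field_int (K : fieldType) (z : int) : in_prime_field (z%:~R : K).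
Proof. by exists z, 1; rewrite divr1 oner_neq0. Qed.

Lemma mmap_coef_eq0 (K : fieldType) k (e : 'I_k -> K) (H : {mpoly int[k]}) :
  (forall m, (H@_m)%:~R = 0 :> K) -> mmap intr e H = 0.
Proof. by move=> H0; rewrite /mmap big1_seq // => m _; rewrite H0 mul0r. Qed.

Section Specialization.
Variables (K : fieldType) (k : nat) (a : 'I_k.+1 -> K) (c : nat).
Hypothesis indep : alg_indep_prime a.
Hypothesis c_le_k : (c <= k)%N.
Hypothesis k_gt0 : (0 < k)%N.

Lemma alg_indep_lead_neq0 : a ord_max != 0.
Proof.
have X_prime m : in_prime_field (('X_ord_max : {mpoly K[k.+1]})@_m).
  by rewrite mcoeffX; exists (U_(ord_max)%MM == m)%:R, 1;
     rewrite rmorph1 divr1 rmorph_nat oner_neq0.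
rewrite -(mevalXU a) indep //; apply/eqP => /(congr1 (meval (fun=> 1))).
by rewrite mevalXU meval0 => /eqP; rewrite oner_eq0.
Qed.

Definition lead_inv := (a ord_max)^-1.

(* The generators of the ring A, indexed like [a]; [weight m] is the power of
   [lead_inv] in the monomial [m] of the generators. *)
Definition gens (i : 'I_k.+1) : K :=
  if i == ord_max then lead_inv else if (i < c)%N then lead_inv * a i else a i.

Definition weight (m : 'X_{1..k.+1}) : nat :=
  \sum_(i < k.+1) ((i == ord_max) || (i < c)%N) * m i.

Lemma mmap1_gens m :
  mmap1 gens m =
    lead_inv ^+ weight m * \prod_(i < k.+1) a i ^+ ((i != ord_max) * m i).
Proof.
rewrite /mmap1 /weight -prodrXr -big_split /=; apply: eq_bigr => i _.
rewrite /gens; case: eqP => [-> | _] /=; first by rewrite mul1n mul0n expr0 mulr1.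
by case: ifP => _; rewrite mul1n ?mul0n ?expr0 ?mul1r // exprMn.
Qed.

Lemma weight_le_mdeg m : (weight m <= mdeg m)%N.
Proof.
by rewrite mdegE; apply: leq_sum => i _; case: (_ || _); rewrite ?mul1n.
Qed.

(* Clearing denominators with [a_max ^+ D] maps the monomial [m] of the
   generators to the monomial [shift D m] of the [a i]. *)
Definition shift (D : nat) (m : 'X_{1..k.+1}) : 'X_{1..k.+1} :=
  [multinom if i == ord_max then (D - weight m)%N else m i | i < k.+1].

Lemma shift_inj D m1 m2 : (weight m1 <= D)%N -> (weight m2 <= D)%N ->
  shift D m1 = shift D m2 -> m1 = m2.
Proof.
move=> le1 le2 /mnmP E.
have off i : i != ord_max -> m1 i = m2 i.
  by move=> ni; have := E i; rewrite !mnmE (negbTE ni).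
have wE : weight m1 = weight m2.
  by have := E ord_max; rewrite !mnmE eqxx => /(congr1 (subn D)); rewrite !subKn.
apply/mnmP => i; have [-> | /off //] := eqVneq i ord_max.
move: wE; rewrite /weight (bigD1 ord_max) //= [in RHS](bigD1 ord_max) //=.
rewrite eqxx !mul1n.
rewrite (eq_bigr (fun i => (((i == ord_max) || (i < c)) * m2 i)%N)).
  exact: addIn.
by move=> j /off ->.
Qed.

Lemma prod_shift D m : (weight m <= D)%N ->
  \prod_(i < k.+1) a i ^+ shift D m i = a ord_max ^+ D * mmap1 gens m.
Proof.
move=> le; rewrite mmap1_gens (bigD1 ord_max) //= [in RHS](bigD1 ord_max) //=.
rewrite mnmE !eqxx mul0n expr0 mul1r.
rewrite (eq_bigr (fun i => a i ^+ ((i != ord_max) * m i))).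
  have aw : a ord_max ^+ weight m * lead_inv ^+ weight m = 1.
    by rewrite -exprMn /lead_inv mulfV ?alg_indep_lead_neq0 ?expr1n.
  by rewrite -{2}(subnK le) exprD -mulrA; congr (_ * _); rewrite mulrA aw mul1r.
by move=> i ni; rewrite mnmE (negbTE ni) mul1n.
Qed.

Lemma gens_alg_indep (H : {mpoly int[k.+1]}) :
  mmap intr gens H = 0 -> forall m, (H@_m)%:~R = 0 :> K.
Proof.
move=> H0 m0; apply/eqP; apply: contraT => nz.
have m0_supp : m0 \in msupp H.
  by rewrite mcoeff_msupp; apply: contraNneq nz => ->.
pose D := msize H.
have wD m : m \in msupp H -> (weight m <= D)%N.
  by move=> ms; apply: leq_trans (weight_le_mdeg m) (ltnW (msize_mdeg_lt ms)).
pose Q : {mpoly K[k.+1]} := \sum_(m <- msupp H) (H@_m)%:~R *: 'X_[shift D m].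
have Q_prime m' : in_prime_field (Q@_m').
  have -> : Q@_m' = (\sum_(m <- msupp H) H@_m * (shift D m == m')%:R)%:~R.
    rewrite /Q raddf_sum rmorph_sum; apply: eq_bigr => m _.
    by rewrite /= mcoeffZ mcoeffX rmorphM /= rmorph_nat.
  exact: in_prime_field_int.
have Q_neq0 : Q != 0.
  apply/eqP => /mpolyP /(_ (shift D m0)); rewrite mcoeff0 /Q raddf_sum /=.
  rewrite (bigD1_seq m0) ?msupp_uniq //= big1_seq => [|m /andP [nm ms]].
    by rewrite mcoeffZ mcoeffX eqxx mulr1 addr0 => E; rewrite E eqxx in nz.
  rewrite mcoeffZ mcoeffX; case: eqP => [E|_]; last by rewrite mulr0.
  by move: nm; rewrite (shift_inj (wD _ ms) (wD _ m0_supp) E) eqxx.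
have := indep Q_prime Q_neq0.
have -> : Q.@[a] = a ord_max ^+ D * mmap intr gens H.
  rewrite /Q raddf_sum /= /mmap mulr_sumr; apply: eq_big_seq => m ms.
  by rewrite mevalZ mevalX prod_shift ?wD // mulrCA.
by rewrite H0 mulr0 eqxx.
Qed.

Local Notation phi := (mmap intr gens).
Local Notation S := (integral_closure phi).
Local Notation P := (\sum_(i < k.+1) a i *: 'X ^+ i.+1).

Lemma gens_integral i : gens i \in S.
Proof. by have := rmorph_integral phi ('X_i); rewrite /= mmapX mmap1U. Qed.

Lemma lead_inv_integral : lead_inv \in S.
Proof. by have := gens_integral ord_max; rewrite /gens eqxx. Qed.

Lemma lead_inv_mul : lead_inv * a ord_max = 1.
Proof. by rewrite mulVf ?alg_indep_lead_neq0. Qed.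

Lemma lead_inv_mul_integral i : lead_inv * a i \in S.
Proof.
have [-> | ni] := eqVneq i ord_max; first by rewrite lead_inv_mul rpred1.
have := gens_integral i; rewrite /gens (negbTE ni).
by case: ifP => // _ ai_S; rewrite rpredM ?lead_inv_integral.
Qed.

Lemma power_neq_lead_inv_mul (rh : {mpoly int[k.+1]}) (e : 'I_k.+1 -> K) n Y :
  e ord_max = 0 -> mmap intr e rh != 0 -> Y \in S -> phi rh ^+ n != lead_inv * Y.
Proof.
move=> e0 rh_e /integral_closureP [p p_monic pY0]; apply/eqP => rhE.
pose l := (size p).-1.
have sz_p : size p = l.+1 by rewrite prednK // lt0n size_poly_eq0 monic_neq0.
(* H(gens) = lead_inv^l p(Y) = 0, whereas H(e) = rh(e)^(n l) != 0. *)
pose H := \sum_(i < l.+1) p`_i * rh ^+ (n * i) * 'X_ord_max ^+ (l - i).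
have : phi H = 0.
  have sz_pY : size (map_poly phi p) = size p.
    by apply: size_map_poly_id0; rewrite (monicP p_monic) rmorph1 oner_neq0.
  rewrite -(mulr0 (lead_inv ^+ l)) -(rootP pY0).
  rewrite (horner_coef_wide _ (eq_leq sz_pY)) sz_p.
  rewrite rmorph_sum mulr_sumr; apply: eq_bigr => i _.
  rewrite !rmorphM !rmorphXn /= coef_map /= mmapX mmap1U exprM rhE exprMn.
  have -> : lead_inv ^+ l = lead_inv ^+ (l - i) * lead_inv ^+ i.
    by rewrite -exprD subnK // -ltnS.
  by rewrite [gens _]/gens eqxx; ring.
move/gens_alg_indep/(mmap_coef_eq0 e).
rewrite rmorph_sum big_ord_recr /= big1 => [|i _].
  rewrite add0r subnn expr0 mulr1 !rmorphM !rmorphXn /=.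
  have -> : p`_l = 1 by rewrite -(monicP p_monic) lead_coefE sz_p.
  by rewrite rmorph1 mul1r => /eqP; rewrite expf_eq0 (negbTE rh_e) andbF.
rewrite !rmorphM !rmorphXn /= mmapX mmap1U e0.
by rewrite expr0n subn_eq0 leqNgt ltn_ord /= mulr0.
Qed.

Definition trunc_poly : {poly K} :=
  'X ^+ k.+1 + \sum_(i < k.+1 | (i < c)%N) gens i *: 'X ^+ i.+1.

Definition mid_poly : {poly K} :=
  \sum_(i < k.+1 | (c <= i)%N && (i != ord_max)) a i *: 'X ^+ i.+1.

Lemma scale_poly_split : lead_inv *: P = trunc_poly + lead_inv *: mid_poly.
Proof.
have low_neq_max (i : 'I_k.+1) : (i < c)%N -> i != ord_max.
  by move=> ic; rewrite -(inj_eq val_inj) /= neq_ltn (leq_trans ic c_le_k).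
rewrite scaler_sumr (bigD1 ord_max) //= scalerA lead_inv_mul scale1r -addrA.
congr (_ + _); rewrite (bigID (fun i : 'I_k.+1 => (i < c)%N)) /= scaler_sumr.
congr (_ + _); last by apply: eq_bigl => i; rewrite andbC -leqNgt.
rewrite (eq_bigl (fun i : 'I_k.+1 => (i < c)%N)) => [|i]; last first.
  exact/andb_idl/low_neq_max.
by apply: eq_bigr => i ic; rewrite scalerA /gens ic (negbTE (low_neq_max _ ic)).
Qed.

Lemma mid_poly_integral : mid_poly \is a polyOver S.
Proof.
rewrite rpred_sum // => i /andP [ci ni]; rewrite polyOverZ ?polyOverXn //.
by have := gens_integral i; rewrite /gens (negbTE ni) ltnNge ci.
Qed.

Lemma no_parabolic_of_bezout (rh : {mpoly int[k.+1]}) (e : 'I_k.+1 -> K)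
    (A B : {poly K}) :
  e ord_max = 0 -> mmap intr e rh != 0 ->
  A \is a polyOver S -> B \is a polyOver S ->
  B * trunc_poly^`() + A * trunc_poly = (phi rh)%:P ->
  forall z0, ~ parabolic_periodic_point P z0.
Proof.
move=> e0 rh_e A_S B_S bezout z0 z0_par.
pose C := B * mid_poly^`() + A * mid_poly.
have C_S : C \is a polyOver S.
  by rewrite rpredD ?rpredM ?polyOver_deriv ?mid_poly_integral.
have bezout_mod :
    B * (lead_inv *: P^`()) + A * (lead_inv *: P) = (phi rh)%:P + lead_inv *: C.
  rewrite -derivZ scale_poly_split derivD derivZ -bezout /C -!mul_polyC; ring.
have P_periodic_integral := periodic_point_integral k_gt0 lead_inv_integral
  lead_inv_mul_integral lead_inv_mul.
have [n [Y Y_S]] := parabolic_power_dvd lead_inv_integral (rmorph_integral _ _)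
  P_periodic_integral A_S B_S C_S bezout_mod z0_par.
by apply/eqP; rewrite (power_neq_lead_inv_mul _ e0 rh_e Y_S).
Qed.

End Specialization.

Lemma bezout_binomial (R : comNzRingType) (S : subringClosed R) (b : R) k :
  b \in S ->
  exists2 A, A \is a polyOver S & exists2 B, B \is a polyOver S &
    B * ('X ^+ k.+1 *+ k.+2 + b%:P) + A * ('X ^+ k.+2 + b *: 'X)
    = (b ^+ 2 *+ k.+1)%:P.
Proof.
move=> b_S; exists (- ('X ^+ k *+ (k.+2 ^ 2))).
  by rewrite rpredN rpredMn ?rpredX ?polyOverX.
exists (b%:P *+ k.+1 + 'X ^+ k.+1 *+ k.+2).
  by rewrite rpredD ?rpredMn ?polyOverC ?rpredX ?polyOverX.
by rewrite -mul_polyC !exprS; ring.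
Qed.

Lemma bezout_trinomial (R : comNzRingType) (S : subringClosed R) (b1 b2 : R) k :
  b1 \in S -> b2 \in S ->
  exists2 A, A \is a polyOver S & exists2 B, B \is a polyOver S &
    B * ('X ^+ k.+2 + b1%:P + b2 *: 'X *+ 2)
    + A * ('X ^+ k.+3 + b1 *: 'X + b2 *: 'X ^+ 2)
    = (b1 ^+ 2 * b2 ^+ 2)%:P.
Proof.
move=> b1_S b2_S; pose C := (b1 * b2)%:P - (b2 ^+ 2)%:P * 'X *+ 2.
exists (C * 'X ^+ k - (b2 ^+ 3)%:P *+ 4).
  by rewrite ?(rpredB, rpredN, rpredMn, rpredM, rpredX, polyOverC, polyOverX,
                b1_S, b2_S).
exists (C * (b2%:P - 'X ^+ k.+1) + (b2 ^+ 3)%:P * 'X *+ 4).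
  by rewrite ?(rpredD, rpredB, rpredN, rpredMn, rpredM, rpredX, polyOverC,
                polyOverX, b1_S, b2_S).
by rewrite /C -!mul_polyC !exprS; ring.
Qed.

Lemma no_parabolic_char_ndvd (K : fieldType) k (a : 'I_k.+2 -> K) :
  alg_indep_prime a -> k.+1%:R != 0 :> K ->
  forall z0, ~ parabolic_periodic_point (\sum_(i < k.+2) a i *: 'X ^+ i.+1) z0.
Proof.
move=> indep k_neq0; pose e (i : 'I_k.+2) : K := (i != ord_max)%:R.
have [A A_S [B B_S bezout]] := bezout_binomial k (gens_integral a 1 ord0).
apply: (no_parabolic_of_bezout (c := 1) (rh := 'X_ord0 ^+ 2 *+ k.+1) (e := e)
  indep _ _ _ _ A_S B_S) => //.
- by rewrite /e eqxx.
- by rewrite rmorphMn rmorphXn /= mmapX mmap1U /e expr1n.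
rewrite /trunc_poly (big_pred1 ord0) => [|i]; last by rewrite ltnS leqn0.
rewrite derivD derivZ !derivXn expr0 mulr1n alg_polyC expr1.
by rewrite rmorphMn rmorphXn /= mmapX mmap1U.
Qed.

Lemma no_parabolic_char_dvd (K : fieldType) k (a : 'I_k.+3 -> K) :
  alg_indep_prime a -> k.+2%:R = 0 :> K ->
  forall z0, ~ parabolic_periodic_point (\sum_(i < k.+3) a i *: 'X ^+ i.+1) z0.
Proof.
move=> indep k_eq0; pose e (i : 'I_k.+3) : K := (i != ord_max)%:R.
pose i1 : 'I_k.+3 := Ordinal (isT : 1 < k.+3)%N.
have [A A_S [B B_S bezout]] :=
  bezout_trinomial k (gens_integral a 2 ord0) (gens_integral a 2 i1).
apply: (no_parabolic_of_bezout (c := 2) (rh := 'X_ord0 ^+ 2 * 'X_i1 ^+ 2)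
  (e := e) indep _ _ _ _ A_S B_S) => //.
- by rewrite /e eqxx.
- by rewrite rmorphM !rmorphXn /= !mmapX !mmap1U /e /= !expr1n mulr1 oner_neq0.
have Xk : 'X ^+ k.+2 *+ k.+3 = 'X ^+ k.+2 :> {poly K}.
  by rewrite -scaler_nat mulrSr k_eq0 add0r scale1r.
rewrite /trunc_poly (bigD1 ord0) //= (big_pred1 i1) => [|i]; last first.
  by case: i => [[|[|i]] ?].
rewrite !derivD !derivZ !derivXn expr0 mulr1n alg_polyC expr1 Xk -scalerMnr addrA.
have -> : mmap intr (gens a 2) ('X_ord0 ^+ 2 * 'X_i1 ^+ 2) =
          gens a 2 ord0 ^+ 2 * gens a 2 i1 ^+ 2.
  by rewrite rmorphM !rmorphXn /= !mmapX !mmap1U.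
by rewrite -bezout !addrA.
Qed.

Unset Implicit Arguments.

Theorem lemma5p2 (K : fieldType) (d : nat) (a : 'I_d -> K) :
  (2 <= d)%N ->
  alg_indep_prime a ->
  (forall p : nat, p \in [pchar K] -> (p <= d)%N) ->
  forall z0 : K,
    ~ parabolic_periodic_point (\sum_(i < d) a i *: (polyX K) ^+ i.+1) z0.
Proof.
case: d a => [|[|k]] a // _ indep _ z0.
have [k_eq0 | k_neq0] := eqVneq (k.+1%:R : K) 0.
  case: k a indep k_eq0 => [|k] a indep k_eq0.
    by move/eqP: k_eq0; rewrite oner_eq0.
  exact: no_parabolic_char_dvd.
exact: no_parabolic_char_ndvd.
Qed.
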